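(* Let $S=(A,\mathrm{in},\mathrm{out},s_0,P)$ be a protocol with $A=\{\mathsf v,\mathsf c,\mathsf e\}$ whose coerced-voter programs are of the form $p_1\parallel\cdots\parallel p_n$ with $p_i\in\mathrm{Proc}(I_i,O_i)$, let $S_1,\dots,S_n$ be the derived single-voter protocols, and let $T,T_1,\dots,T_n$ be the coercion systems induced by $S,S_1,\dots,S_n$. Let $\alpha_0,\dots,\alpha_n$ and $\gamma_1,\dots,\gamma_n$ be sets of runs of $T$. If for each $i\in\{1,\dots,n\}$ the system $T_i$ is coercion resistant for $(\alpha_0,\dots,\alpha_n)$ w.r.t. $\gamma_i$ (with properties of $T$ viewed as properties of $T_i$ via $\rho\mapsto\rho^{(i)}$), then $T$ is multi-voter coercion resistant in $\alpha_n$ w.r.t. $\gamma_1\cap\dots\cap\gamma_n$.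
   Context: Protocols and induced coercion systems are as follows. A protocol is $S=(A,\mathrm{in},\mathrm{out},s_0,P)$ with agents $A$, input/output channel sets $\mathrm{in}(a),\mathrm{out}(a)$ (input sets of distinct agents disjoint), initial output sequence $s_0$, and for each agent a set $P(a)$ of processes over its channels, closed under renaming of nonces ($\simeq$). Processes are finite sets of atomic processes (functions from views of received messages to output messages) with disjoint input channels and nonces; $\mathrm{Proc}(I,O)$ denotes all processes with input channels in $I$ and output channels in $O$; $\parallel$ is union of non-conflicting processes. For $A=\{\mathsf v,\mathsf c,\mathsf e\}$ the induced coercion system $(R,V,C,E,r,\sim)$ has $V=P(\mathsf v)$, $C=P(\mathsf c)$, $E=P(\mathsf e)$, $R$ the tuples $(v,c,e,\pi)$ with $\pi$ a fair run (initiated by $s_0$) of $v\parallel c\parallel e$, $r(v,c,e)$ the set of such tuples $(\hat v,\hat c,\hat e,\pi)$ with $\hat v\simeq v,\hat c\simeq c,\hat e\simeq e$, and $(v,c,e,\pi)\sim(v',c',e',\pi')$ iff $c=c'$ and $\pi,\pi'$ are statically equivalent w.r.t. the input channels and nonces of $c$ (the coercer's view). Setting: $\mathrm{in}(\mathsf v)=I_1\cup\dots\cup I_n$, $\mathrm{out}(\mathsf v)=O_1\cup\dots\cup O_n$, and each program of $\mathsf v$ is $p_1\parallel\cdots\parallel p_n$ where $p_i\in\mathrm{Proc}(I_i,O_i)$ is the program of coerced voter $\mathsf v_i$. For $i\in\{1,\dots,n\}$ and $W=\{1,\dots,n\}\setminus\{i\}$, $S_i=(A,\mathrm{in}_i,\mathrm{out}_i,s_0,P_i)$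 with $\mathrm{in}_i(\mathsf v)=I_i$, $\mathrm{out}_i(\mathsf v)=O_i$, $\mathrm{in}_i(\mathsf c)=\mathrm{in}(\mathsf c)\cup\bigcup_{j\in W}I_j$, $\mathrm{out}_i(\mathsf c)=\mathrm{out}(\mathsf c)\cup\bigcup_{j\in W}O_j$, $\mathrm{in}_i(\mathsf e)=\mathrm{in}(\mathsf e)$, $\mathrm{out}_i(\mathsf e)=\mathrm{out}(\mathsf e)$, $P_i(\mathsf e)=P(\mathsf e)$, $P_i(\mathsf v)=\mathrm{Proc}(\mathrm{in}_i(\mathsf v),\mathrm{out}_i(\mathsf v))$, $P_i(\mathsf c)=\mathrm{Proc}(\mathrm{in}_i(\mathsf c),\mathrm{out}_i(\mathsf c))$. For a run $\rho=((v_1\parallel\cdots\parallel v_n),c,e,\pi)$ of $T$, $\rho^{(i)}=(v_i,(v_1\parallel\cdots\parallel v_{i-1}\parallel v_{i+1}\parallel\cdots\parallel v_n\parallel c),e,\pi)$, a run of $T_i$; for $\beta\subseteq R$, $\beta^{(i)}=\{\rho^{(i)}:\rho\in\beta\}$. A system $(R,V,C,E,r,\sim)$ is coercion resistant for $(\alpha_0,\dots,\alpha_n)$ w.r.t. $\gamma$ if for each $v\in V$ there is $v'\in V$ with: (i) for every $k\in\{1,\dots,n\}$, $c\in C$, $e\in E$, $\rho\in r(v,c,e)\cap\alpha_k$ there exist $e'\in E$ and $\rho'\in r(v',c,e')\cap\alpha_{k-1}$ with $\rho\sim\rho'$; (ii) for every $k\in\{1,\dots,n\}$, $c\in C$, $e\in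 E$, $\rho\in r(v',c,e)\cap\alpha_k$ there exist $e'\in E$ and $\rho'\in r(v,c,e')\cap\alpha_{k-1}$ with $\rho\sim\rho'$; (iii) $r(v',c,e)\subseteq\gamma$ for all $c\in C,e\in E$. Multi-voter coercion resistance of $T$ in $\alpha$ w.r.t. $\gamma$: there exist maps $f_i$ ($i=1,\dots,n$) sending each single-voter strategy $v_i\in\mathrm{Proc}(I_i,O_i)$ to a single-voter strategy $f_i(v_i)\in\mathrm{Proc}(I_i,O_i)$ such that for every $v=(v_1\parallel\cdots\parallel v_n)\in V$, the program $v'=(f_1(v_1)\parallel\cdots\parallel f_n(v_n))$ satisfies: (i) for all $c\in C,e\in E,\rho\in r(v,c,e)\cap\alpha$ there are $e'\in E$, $\rho'\in r(v',c,e')$ with $\rho\sim\rho'$; (ii) for all $c\in C,e\in E,\rho\in r(v',c,e)\cap\alpha$ there are $e'\in E$, $\rho'\in r(v,c,e')$ with $\rho\sim\rho'$; (iii) $r(v',c,e)\subseteq\gamma$ for all $c,e$. *)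

From Stdlib Require Import List.
Import ListNotations.
Set Implicit Arguments.

(* Atomic processes, messages, runs, fair runs and static equivalence are
   kept abstract; only the structural facts that hold in the paper's
   concrete model are assumed. *)
Record Model := {
  Ch : Type;
  Msg : Type;
  AP : Type;
  Run : Type;
  ain : AP -> Ch;
  aout : AP -> Ch -> Prop;
  anon : AP -> list nat;
  aren : (nat -> nat) -> AP -> AP;
  (* fair_run s0 p pi : pi is a fair run of process p initiated by s0 *)
  fair_run : list (Ch * Msg) -> (AP -> Prop) -> Run -> Prop;
  (* steq C N pi pi' : pi, pi' statically equivalent w.r.t. channels C, nonces N *)
  steq : (Ch -> Prop) -> (nat -> Prop) -> Run -> Run -> Prop;
  aren_ain : forall s a, ain (aren s a) = ain a;
  aren_aout : forall s a x, aout (aren s a) x <-> aout a x;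
  aren_anon : forall s a, anon (aren s a) = map s (anon a);
  aren_id : forall a, aren (fun x => x) a = a;
  aren_comp : forall s t a, aren s (aren t a) = aren (fun x => s (t x)) a;
  aren_ext : forall s t a, (forall x, In x (anon a) -> s x = t x) -> aren s a = aren t a;
  steq_refl : forall C N pi, steq C N pi pi;
  steq_sym : forall C N pi pi', steq C N pi pi' -> steq C N pi' pi;
  steq_trans : forall C N pi1 pi2 pi3,
      steq C N pi1 pi2 -> steq C N pi2 pi3 -> steq C N pi1 pi3;
  steq_mono : forall (C C' : Ch -> Prop) (N N' : nat -> Prop) pi pi',
      (forall x, C x -> C' x) -> (forall x, N x -> N' x) ->
      steq C' N' pi pi' -> steq C N pi pi'
}.

Arguments ain {m}. Arguments aout {m}. Arguments anon {m}. Arguments aren {m}.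

Section Framework.
Variable M : Model.

Definition proc := AP M -> Prop.

Definition is_proc (I O : Ch M -> Prop) (p : proc) : Prop :=
  (exists l : list (AP M), forall a, p a <-> In a l) /\
  (forall a, p a -> I (ain a) /\ (forall x, aout a x -> O x)) /\
  (forall a b, p a -> p b -> a <> b ->
     ain a <> ain b /\ (forall x, In x (anon a) -> In x (anon b) -> False)).

(* parallel composition (union; it is a process iff non-conflicting) *)
Definition par (p q : proc) : proc := fun a => p a \/ q a.
Definition bigpar (n : nat) (ps : nat -> proc) : proc :=
  fun a => exists i, i < n /\ ps i a.
Definition restr (p : proc) (C : Ch M -> Prop) : proc := fun a => p a /\ C (ain a).

Definition bij (s : nat -> nat) : Prop :=
  exists t, (forall x, t (s x) = x) /\ (forall y, s (t y) = y).
Definition renames (p q : proc) : Prop :=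
  exists s, bij s /\ (forall b, q b <-> exists a, p a /\ b = aren s a).

Definition chans (p : proc) : Ch M -> Prop := fun x => exists a, p a /\ ain a = x.
Definition nons (p : proc) : nat -> Prop := fun m => exists a, p a /\ In m (anon a).

Inductive agent := Voter | Coercer | Env.

Record protocol := {
  pin : agent -> Ch M -> Prop;
  pout : agent -> Ch M -> Prop;
  ps0 : list (Ch M * Msg M);
  pP : agent -> proc -> Prop
}.

Definition is_protocol (S : protocol) : Prop :=
  (forall a b, a <> b -> forall x, pin S a x -> pin S b x -> False) /\
  (forall a p, pP S a p -> is_proc (pin S a) (pout S a) p) /\
  (forall a p q, pP S a p -> renames p q -> pP S a q).

Record run4 := mkrun { rv : proc; rc : proc; re : proc; rpi : Run M }.

Record csys := {
  cR : run4 -> Prop;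
  cV : proc -> Prop;
  cC : proc -> Prop;
  cE : proc -> Prop;
  cr : proc -> proc -> proc -> run4 -> Prop;
  csim : run4 -> run4 -> Prop
}.

(* pi is a fair run (initiated by s0) of v || c || e (which must be defined,
   i.e. non-conflicting) *)
Definition runs_of (S : protocol) (v c e : proc) (pi : Run M) : Prop :=
  is_proc (fun _ => True) (fun _ => True) (par v (par c e)) /\
  fair_run M (ps0 S) (par v (par c e)) pi.

Definition induced (S : protocol) : csys := {|
  cR := fun rho => pP S Voter (rv rho) /\ pP S Coercer (rc rho) /\
                   pP S Env (re rho) /\ runs_of S (rv rho) (rc rho) (re rho) (rpi rho);
  cV := pP S Voter;
  cC := pP S Coercer;
  cE := pP S Env;
  cr := fun v c e rho => renames v (rv rho) /\ renames c (rc rho) /\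
                         renames e (re rho) /\ runs_of S (rv rho) (rc rho) (re rho) (rpi rho);
  csim := fun rho rho' => rc rho = rc rho' /\
            steq M (chans (rc rho)) (nons (rc rho)) (rpi rho) (rpi rho')
|}.

Definition coercion_resistant (T : csys) (n : nat)
    (alpha : nat -> run4 -> Prop) (gamma : run4 -> Prop) : Prop :=
  forall v, cV T v -> exists v', cV T v' /\
    (forall k c e rho, 1 <= k <= n -> cC T c -> cE T e ->
       cr T v c e rho -> alpha k rho ->
       exists e' rho', cE T e' /\ cr T v' c e' rho' /\ alpha (k - 1) rho' /\ csim T rho rho') /\
    (forall k c e rho, 1 <= k <= n -> cC T c -> cE T e ->
       cr T v' c e rho -> alpha k rho ->
       exists e' rho', cE T e' /\ cr T v c e' rho' /\ alpha (k - 1) rho' /\ csim T rho rho') /\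
    (forall c e rho, cC T c -> cE T e -> cr T v' c e rho -> gamma rho).

(* Multi-voter coercion resistance of T in alpha w.r.t. gamma
   (voters indexed 0 .. n-1, voter i has channels I i, O i). *)
Definition mv_coercion_resistant (T : csys) (n : nat) (I O : nat -> Ch M -> Prop)
    (alpha gamma : run4 -> Prop) : Prop :=
  exists f : nat -> proc -> proc,
    (forall i vi, i < n -> is_proc (I i) (O i) vi -> is_proc (I i) (O i) (f i vi)) /\
    forall vs : nat -> proc,
      (forall i, i < n -> is_proc (I i) (O i) (vs i)) ->
      cV T (bigpar n vs) ->
      let v := bigpar n vs in
      let v' := bigpar n (fun i => f i (vs i)) in
      (forall c e rho, cC T c -> cE T e -> cr T v c e rho -> alpha rho ->
         exists e' rho', cE T e' /\ cr T v' c e' rho' /\ csim T rho rho') /\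
      (forall c e rho, cC T c -> cE T e -> cr T v' c e rho -> alpha rho ->
         exists e' rho', cE T e' /\ cr T v c e' rho' /\ csim T rho rho') /\
      (forall c e rho, cC T c -> cE T e -> cr T v' c e rho -> gamma rho).

Definition others (n : nat) (X : nat -> Ch M -> Prop) (i : nat) : Ch M -> Prop :=
  fun x => exists j, j < n /\ j <> i /\ X j x.

Definition single_voter (S : protocol) (n : nat) (I O : nat -> Ch M -> Prop) (i : nat)
  : protocol :=
  let in_i := fun a => match a with
                       | Voter => I i
                       | Coercer => fun x => pin S Coercer x \/ others n I i x
                       | Env => pin S Env end in
  let out_i := fun a => match a with
                        | Voter => O i
                        | Coercer => fun x => pout S Coercer x \/ others n O i x
                        | Env => pout S Env end in
  {| pin := in_i;
     pout := out_i;
     ps0 := ps0 S;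
     pP := fun a => match a with
                    | Voter => is_proc (in_i Voter) (out_i Voter)
                    | Coercer => is_proc (in_i Coercer) (out_i Coercer)
                    | Env => pP S Env end |}.

Definition proj_run (n : nat) (I : nat -> Ch M -> Prop) (i : nat) (rho : run4) : run4 :=
  mkrun (restr (rv rho) (I i))
        (par (restr (rv rho) (others n I i)) (rc rho))
        (re rho) (rpi rho).

Definition proj_set (n : nat) (I : nat -> Ch M -> Prop) (i : nat) (beta : run4 -> Prop)
  : run4 -> Prop :=
  fun rho' => exists rho, beta rho /\ rho' = proj_run n I i rho.

End Framework.

(* Coercion resistance of [T_i] gives, for each program [v_i] of voter [i], a
   counter-strategy [v'_i]; renamed so that its nonces lie in the residue
   class of [i] modulo [n], these compose, and the multi-voter
   counter-strategy maps [v_1 || ... || v_n] to [v'_1 || ... || v'_n].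

   Requirements (i) and (ii) follow by a hybrid argument: starting from a run
   of [T] in [alpha_n], the voters are replaced one at a time.  Replacing
   voter [i] applies (i) or (ii) of [T_i] to the projected run [rho^(i)], in
   which the other voters have joined the coercer; the resulting run of [T_i]
   is again a projection of a run of [T] (since [alpha_k^(i)] consists of
   projections), one level of alpha lower, with the same coercer and an
   equivalent coercer view.  After [n] steps the voter is, part by part, a
   renaming of the new programs, and these renamings glue to one.
   Requirement (iii) holds because [rho |-> rho^(i)] is injective on runs. *)
From Stdlib Require Import List Arith Lia Classical ClassicalEpsilon
  FunctionalExtensionality PropExtensionality.
Import ListNotations.

Section Processes.
Context {M : Model}.

Lemma proc_ext (p q : proc M) : (forall a, p a <-> q a) -> p = q.
Proof.
  intro H. apply functional_extensionality. intro a.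
  apply propositional_extensionality, H.
Qed.

Definition finite_proc (p : proc M) : Prop :=
  exists l : list (AP M), forall a, p a <-> In a l.

Lemma finite_sub (p q : proc M) :
  finite_proc p -> (forall a, q a -> p a) -> finite_proc q.
Proof.
  intros [l Hl] Hqp.
  assert (Hfilter : forall l0, exists l', forall a, In a l' <-> In a l0 /\ q a).
  { induction l0 as [|x l0 [l' Hl']].
    - exists []. simpl. tauto.
    - destruct (classic (q x)) as [Hx|Hx].
      + exists (x :: l'). intro a. simpl. rewrite Hl'.
        split; [intros [<-|H]|intros [[<-|H] Ha]]; tauto.
      + exists l'. intro a. simpl. rewrite Hl'.
        split; [tauto|intros [[<-|H] Ha]; tauto]. }
  destruct (Hfilter l) as [l' Hl']. exists l'. intro a. rewrite Hl', <- Hl.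
  split; [auto|tauto].
Qed.

Lemma finite_bigpar (n : nat) (u : nat -> proc M) :
  (forall j, j < n -> finite_proc (u j)) -> finite_proc (bigpar n u).
Proof.
  induction n as [|n IH]; intro Hfin.
  - exists []. intro a. unfold bigpar. simpl. split; [intros [i [Hi _]]; lia|tauto].
  - destruct IH as [l1 H1]; [intros j Hj; apply Hfin; lia|].
    destruct (Hfin n (Nat.lt_succ_diag_r n)) as [l2 H2].
    exists (l1 ++ l2). intro a. rewrite in_app_iff, <- H1, <- H2. unfold bigpar.
    split.
    + intros [i [Hi Ha]]. destruct (Nat.eq_dec i n) as [->|Hne]; [now right|].
      left. exists i. split; [lia|auto].
    + intros [[i [Hi Ha]]|Ha]; [exists i|exists n]; split; auto; lia.
Qed.

Definition nonce_disjoint (n : nat) (u : nat -> proc M) : Prop :=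
  forall j j' x, j < n -> j' < n -> j <> j' -> nons (u j) x -> nons (u j') x -> False.

Lemma bigpar_nonce_disjoint (n : nat) (I : nat -> Ch M -> Prop) (u : nat -> proc M)
    (C O : Ch M -> Prop) :
  (forall i j x, i < n -> j < n -> i <> j -> I i x -> I j x -> False) ->
  (forall j a, j < n -> u j a -> I j (ain a)) ->
  is_proc C O (bigpar n u) -> nonce_disjoint n u.
Proof.
  intros HD Hch [_ [_ Hdisj]] j j' x Hj Hj' Hne [a [Ha Hx]] [b [Hb Hx']].
  assert (Hab : a <> b) by (intros ->; apply (HD j j' (ain b)); auto).
  refine (proj2 (Hdisj a b _ _ Hab) x Hx Hx'); [exists j|exists j']; auto.
Qed.

End Processes.

Lemma bij_inj (s : nat -> nat) : bij s -> forall x y, s x = s y -> x = y.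
Proof. intros [t [H1 _]] x y E. rewrite <- (H1 x), <- (H1 y), E. reflexivity. Qed.

Lemma bij_id : bij (fun x => x).
Proof. exists (fun x => x). split; reflexivity. Qed.

Lemma bij_comp (s t : nat -> nat) : bij s -> bij t -> bij (fun x => s (t x)).
Proof.
  intros [s' [A1 A2]] [t' [B1 B2]]. exists (fun y => t' (s' y)).
  split; intro; [rewrite A1, B1|rewrite B2, A2]; reflexivity.
Qed.

Definition swap (p q x : nat) : nat :=
  if Nat.eq_dec x p then q else if Nat.eq_dec x q then p else x.

Lemma bij_swap (p q : nat) : bij (swap p q).
Proof.
  exists (swap p q).
  assert (Hinv : forall x, swap p q (swap p q x) = x).
  { intro x. unfold swap. repeat (destruct Nat.eq_dec; subst; try congruence). }
  split; exact Hinv.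
Qed.

Lemma injective_extends_to_bij (L : list nat) (g : nat -> nat) :
  (forall x y, In x L -> In y L -> g x = g y -> x = y) ->
  exists s, bij s /\ forall x, In x L -> s x = g x.
Proof.
  induction L as [|a L IH]; intro Hg.
  - exists (fun x => x). split; [apply bij_id|simpl; tauto].
  - destruct IH as [t [Ht Htg]]; [intros x y Hx Hy; apply Hg; simpl; auto|].
    destruct (in_dec Nat.eq_dec a L) as [Ha|Ha].
    { exists t. split; auto. intros x [<-|Hx]; auto. }
    (* compose with the transposition of [g a] and [t a] *)
    exists (fun x => swap (g a) (t a) (t x)). split; [apply bij_comp; auto using bij_swap|].
    intros x [<-|Hx]; unfold swap.
    + destruct Nat.eq_dec; [congruence|]. destruct Nat.eq_dec; congruence.
    + rewrite (Htg x Hx). destruct Nat.eq_dec as [E|].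
      * assert (x = a) by (apply Hg; simpl; auto). subst. contradiction.
      * destruct Nat.eq_dec as [E|]; auto. rewrite <- (Htg x Hx) in E.
        apply (bij_inj _ Ht) in E. subst. contradiction.
Qed.

Section Renaming.
Context {M : Model}.

Lemma renames_refl (p : proc M) : renames p p.
Proof.
  exists (fun x => x). split; [apply bij_id|]. intro b. split.
  - intro Hb. exists b. rewrite aren_id. auto.
  - intros [a [Ha ->]]. rewrite aren_id. auto.
Qed.

Lemma renames_sym (p q : proc M) : renames p q -> renames q p.
Proof.
  intros [s [[t [Hts Hst]] Hq]]. exists t. split; [exists s; split; auto|].
  assert (Hback : forall a : AP M, aren t (aren s a) = a).
  { intro a. rewrite aren_comp. transitivity (aren (fun x => x) a).
    - apply aren_ext. auto.
    - apply aren_id. }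
  intro a. split.
  - intro Ha. exists (aren s a). split; [apply Hq; eauto|]. now rewrite Hback.
  - intros [b [Hb ->]]. apply Hq in Hb. destruct Hb as [a [Ha ->]]. now rewrite Hback.
Qed.

Lemma renames_trans (p q r : proc M) : renames p q -> renames q r -> renames p r.
Proof.
  intros [s [Hs Hq]] [t [Ht Hr]]. exists (fun x => t (s x)).
  split; [apply bij_comp; auto|]. intro c. rewrite Hr. split.
  - intros [b [Hb ->]]. apply Hq in Hb. destruct Hb as [a [Ha ->]]. exists a.
    rewrite aren_comp. auto.
  - intros [a [Ha ->]]. exists (aren s a). split; [apply Hq; eauto|].
    rewrite aren_comp. auto.
Qed.

Lemma renames_is_proc (I O : Ch M -> Prop) (p q : proc M) :
  renames p q -> is_proc I O p -> is_proc I O q.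
Proof.
  intros [s [Hs Hq]] [[l Hl] [Hchan Hdisj]]. split; [|split].
  - exists (map (aren s) l). intro b. rewrite Hq, in_map_iff.
    split; intros [a [H1 H2]]; exists a; split; auto; apply Hl; auto.
  - intros b Hb. apply Hq in Hb. destruct Hb as [a [Ha ->]]. rewrite aren_ain.
    destruct (Hchan a Ha) as [Hi Ho]. split; auto.
    intros x Hx. apply Ho, (aren_aout _ s a x), Hx.
  - intros b1 b2 Hb1 Hb2 Hne. apply Hq in Hb1, Hb2.
    destruct Hb1 as [a1 [Ha1 ->]], Hb2 as [a2 [Ha2 ->]].
    assert (Hne' : a1 <> a2) by (intros ->; auto).
    destruct (Hdisj a1 a2 Ha1 Ha2 Hne') as [Hc Hn]. rewrite !aren_ain. split; auto.
    intros x. rewrite !aren_anon, !in_map_iff. intros [y1 [<- Hy1]] [y2 [E Hy2]].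
    apply (bij_inj _ Hs) in E. subst. eauto.
Qed.

Section Parts.
Variables (n : nat) (I : nat -> Ch M -> Prop).
Hypothesis inputs_disjoint : forall i j x, i < n -> j < n -> i <> j -> I i x -> I j x -> False.

(* A renaming of [u 0 || ... || u (n-1)] restricts to renamings of the parts,
   the parts being separated by their input channels. *)
Lemma renames_parts (u : nat -> proc M) (X : proc M) :
  (forall j a, j < n -> u j a -> I j (ain a)) ->
  renames (bigpar n u) X -> forall j, j < n -> renames (u j) (restr X (I j)).
Proof.
  intros Hch [s [Hs HX]] j Hj. exists s. split; auto. intro b. unfold restr. rewrite HX.
  split.
  - intros [[a [[j' [Hj' Ha]] ->]] Hc]. rewrite aren_ain in Hc.
    destruct (Nat.eq_dec j j') as [<-|Hne]; [eauto|].
    exfalso. apply (inputs_disjoint j j' (ain a)); auto.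
  - intros [a [Ha ->]]. rewrite aren_ain. split; auto. exists a. split; auto. exists j; auto.
Qed.

Lemma common_renaming (u : nat -> proc M) (sigma : nat -> nat -> nat) :
  (forall j, j < n -> finite_proc (u j)) -> nonce_disjoint n u ->
  (forall j1 j2 a b x y, j1 < n -> j2 < n -> u j1 a -> u j2 b ->
     In x (anon a) -> In y (anon b) -> sigma j1 x = sigma j2 y -> x = y) ->
  exists s, bij s /\ forall j a, j < n -> u j a -> aren s a = aren (sigma j) a.
Proof.
  intros Hfin Hnd Hinj.
  (* [owner x] is the part whose atoms use the nonce [x] *)
  destruct (choice (fun x j => forall j', j' < n -> nons (u j') x -> j = j'))
    as [owner Howner].
  { intro x. destruct (classic (exists j, j < n /\ nons (u j) x)) as [[j [Hj Hx]]|Hnone].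
    - exists j. intros j' Hj' Hx'.
      destruct (Nat.eq_dec j j'); [auto|exfalso; eapply Hnd; eauto].
    - exists 0. intros j' Hj' Hx'. exfalso. eauto. }
  destruct (finite_bigpar n u Hfin) as [l Hl].
  assert (Hused : forall j a x, j < n -> u j a -> In x (anon a) ->
            In x (flat_map (@anon M) l) /\ owner x = j).
  { intros j a x Hj Ha Hx. split; [|apply Howner; auto; exists a; auto].
    apply in_flat_map. exists a. split; auto. apply Hl. exists j. auto. }
  destruct (injective_extends_to_bij (flat_map (@anon M) l) (fun x => sigma (owner x) x))
    as [s [Hs Hsg]].
  { intros x y Hx Hy E. apply in_flat_map in Hx, Hy.
    destruct Hx as [a [Ha Hxa]], Hy as [b [Hb Hyb]]. apply Hl in Ha, Hb.
    destruct Ha as [j1 [Hj1 Ha]], Hb as [j2 [Hj2 Hb]].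
    rewrite (proj2 (Hused j1 a x Hj1 Ha Hxa)), (proj2 (Hused j2 b y Hj2 Hb Hyb)) in E.
    eauto. }
  exists s. split; auto. intros j a Hj Ha. apply aren_ext. intros x Hx.
  destruct (Hused j a x Hj Ha Hx) as [HxL Hown]. rewrite Hsg, Hown; auto.
Qed.

(* Conversely, renamings of the parts glue to a renaming of the composition,
   provided distinct parts use distinct nonces and the atoms of [X] use
   distinct nonces (so that the images of different parts do not collide). *)
Lemma renames_glue (u : nat -> proc M) (X : proc M) :
  (forall j, j < n -> finite_proc (u j)) ->
  (forall j a, j < n -> u j a -> I j (ain a)) ->
  nonce_disjoint n u ->
  (forall a b, X a -> X b -> a <> b -> forall x, In x (anon a) -> In x (anon b) -> False) ->
  (forall a, X a -> exists j, j < n /\ I j (ain a)) ->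
  (forall j, j < n -> renames (u j) (restr X (I j))) ->
  renames (bigpar n u) X.
Proof.
  intros Hfin Hch Hnd HX HXch Hren.
  destruct (choice (fun j s => j < n -> bij s /\
              forall b, restr X (I j) b <-> exists a, u j a /\ b = aren s a))
    as [sigma Hsigma].
  { intro j. destruct (classic (j < n)) as [Hj|Hj].
    - destruct (Hren j Hj) as [s Hs]. exists s. auto.
    - exists (fun x => x). tauto. }
  assert (Himage : forall j a x, j < n -> u j a -> In x (anon a) ->
            restr X (I j) (aren (sigma j) a) /\ In (sigma j x) (anon (aren (sigma j) a))).
  { intros j a x Hj Ha Hx. split; [apply (proj2 (Hsigma j Hj)); eauto|].
    rewrite aren_anon. apply in_map. auto. }
  destruct (common_renaming u sigma Hfin Hnd) as [s [Hs Hagree]].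
  { intros j1 j2 a b x y Hj1 Hj2 Ha Hb Hxa Hyb E.
    destruct (Nat.eq_dec j1 j2) as [<-|Hne]; [exact (bij_inj _ (proj1 (Hsigma j1 Hj1)) _ _ E)|].
    exfalso. destruct (Himage j1 a x Hj1 Ha Hxa) as [[Ha' Hc1] Hx'].
    destruct (Himage j2 b y Hj2 Hb Hyb) as [[Hb' Hc2] Hy'].
    rewrite E in Hx'. refine (HX _ _ Ha' Hb' _ _ Hx' Hy').
    intro Eab. rewrite Eab in Hc1. apply (inputs_disjoint j1 j2 _ Hj1 Hj2 Hne Hc1 Hc2). }
  exists s. split; auto. intro b. split.
  - intro Hb. destruct (HXch b Hb) as [j [Hj Hc]].
    destruct (proj1 (proj2 (Hsigma j Hj) b) (conj Hb Hc)) as [a [Ha ->]].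
    exists a. split; [exists j; auto|]. symmetry. apply Hagree; auto.
  - intros [a [[j [Hj Ha]] ->]]. rewrite (Hagree j a Hj Ha).
    apply (proj2 (Hsigma j Hj)). eauto.
Qed.

End Parts.

Definition in_residue_class (n i : nat) (p : proc M) : Prop :=
  forall x, nons p x -> exists y, x = i + n * y.

Lemma residue_classes_disjoint (n : nat) (u : nat -> proc M) :
  (forall j, j < n -> in_residue_class n j (u j)) -> nonce_disjoint n u.
Proof.
  intros Hcl j j' x Hj Hj' Hne Hx Hx'.
  destruct (Hcl j Hj x Hx) as [y ->], (Hcl j' Hj' _ Hx') as [y' E].
  apply Hne. apply (f_equal (fun z => z mod n)) in E.
  rewrite !(Nat.mul_comm n), !Nat.Div0.mod_add, !Nat.mod_small in E by lia. auto.
Qed.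

Lemma rename_into_residue_class (n i : nat) (w : proc M) :
  i < n -> finite_proc w -> exists w', renames w w' /\ in_residue_class n i w'.
Proof.
  intros Hi [l Hl].
  destruct (injective_extends_to_bij (flat_map (@anon M) l) (fun x => i + n * x))
    as [s [Hs Hsg]].
  { intros x y _ _ E. apply (Nat.mul_cancel_l _ _ n); lia. }
  exists (fun b => exists a, w a /\ b = aren s a). split; [exists s; split; tauto|].
  intros x [b [[a [Ha ->]] Hx]]. rewrite aren_anon, in_map_iff in Hx.
  destruct Hx as [y [<- Hy]]. exists y. apply Hsg. apply in_flat_map. exists a.
  split; auto. apply Hl; auto.
Qed.

End Renaming.

Section CoercedVoters.
Context {M : Model} (S : protocol M) (n : nat) (I O : nat -> Ch M -> Prop).
Hypothesis S_protocol : is_protocol S.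
Hypothesis voter_inputs : forall x, pin S Voter x <-> exists i, i < n /\ I i x.
Hypothesis inputs_disjoint :
  forall i j x, i < n -> j < n -> i <> j -> I i x -> I j x -> False.

Lemma program_inputs (ag : agent) (p : proc M) (a : AP M) :
  pP S ag p -> p a -> pin S ag (ain a).
Proof.
  intros Hp Ha. destruct S_protocol as [_ [Hproc _]].
  destruct (Hproc ag p Hp) as [_ [Hch _]]. apply (Hch a Ha).
Qed.

Lemma voter_input_split (i : nat) (x : Ch M) : pin S Voter x -> I i x \/ others _ n I i x.
Proof.
  intro Hx. apply voter_inputs in Hx. destruct Hx as [j [Hj Hx]].
  destruct (Nat.eq_dec j i) as [<-|Hne]; [auto|right; exists j; auto].
Qed.

(* Voter and coercer read from disjoint channels, so a composition of a part
   of the voter with a part of the coercer determines both parts. *)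
Lemma split_voter_coercer (X1 X2 C1 C2 : proc M) :
  (forall a, X1 a -> pin S Voter (ain a)) -> (forall a, X2 a -> pin S Voter (ain a)) ->
  (forall a, C1 a -> pin S Coercer (ain a)) -> (forall a, C2 a -> pin S Coercer (ain a)) ->
  par X1 C1 = par X2 C2 -> X1 = X2 /\ C1 = C2.
Proof.
  intros H1 H2 H3 H4 E.
  assert (Ea : forall a, X1 a \/ C1 a <-> X2 a \/ C2 a).
  { intro a. change (par X1 C1 a <-> par X2 C2 a). rewrite E. tauto. }
  assert (Hvc : forall a, pin S Voter (ain a) -> pin S Coercer (ain a) -> False).
  { intro a. apply (proj1 S_protocol). discriminate. }
  split; apply proc_ext; intro a; specialize (Ea a); specialize (Hvc a);
    split; intro Ha; firstorder.
Qed.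

Definition single_system (i : nat) : csys M := induced (single_voter S n I O i).

Definition voter_parts (u : nat -> proc M) (V : proc M) : Prop :=
  forall j, j < n -> is_proc (I j) (O j) (u j) /\ renames (u j) (restr V (I j)).

(* What a run [rho] of [T] must satisfy for [rho^(i)] to be a run of [T_i]
   of voter program [u i]; the voter program of [rho] itself need not be a
   program of [S]. *)
Definition decomposed_run (u : nat -> proc M) (rho : run4 M) : Prop :=
  pP S Coercer (rc rho) /\ pP S Env (re rho) /\
  runs_of S (rv rho) (rc rho) (re rho) (rpi rho) /\
  (forall a, rv rho a -> pin S Voter (ain a)) /\ voter_parts u (rv rho).

Lemma voter_parts_of_renaming (u : nat -> proc M) (V : proc M) :
  (forall j, j < n -> is_proc (I j) (O j) (u j)) ->
  renames (bigpar n u) V -> voter_parts u V.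
Proof.
  intros Hu Hren j Hj. split; auto. apply renames_parts with n; auto.
  intros j' a Hj' Ha. apply (Hu j' Hj'), Ha.
Qed.

Lemma voter_parts_glue (u : nat -> proc M) (V : proc M) :
  pP S Voter V -> voter_parts u V -> nonce_disjoint n u -> renames (bigpar n u) V.
Proof.
  intros HV Hparts Hnd. destruct S_protocol as [_ [Hproc _]].
  destruct (Hproc Voter V HV) as [_ [_ Hdisj]].
  apply renames_glue with I; auto.
  - intros j Hj. apply (Hparts j Hj).
  - intros j a Hj Ha. apply (Hparts j Hj), Ha.
  - intros a b Ha Hb Hne. apply (Hdisj a b Ha Hb Hne).
  - intros a Ha. apply voter_inputs, (program_inputs Voter V); auto.
  - intros j Hj. apply (Hparts j Hj).
Qed.

Lemma decomposed_of_run (u : nat -> proc M) (c e : proc M) (rho : run4 M) :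
  (forall j, j < n -> is_proc (I j) (O j) (u j)) ->
  cC (induced S) c -> cE (induced S) e -> cr (induced S) (bigpar n u) c e rho ->
  decomposed_run u rho.
Proof.
  intros Hu Hc He [Hv [Hcr [Her Hrun]]]. destruct S_protocol as [_ [_ Hren]].
  split; [eauto|split; [eauto|split; [exact Hrun|split]]];
    [|exact (voter_parts_of_renaming u _ Hu Hv)].
  intros a Ha. destruct Hv as [s [_ Hs]]. apply Hs in Ha.
  destruct Ha as [b [[j [Hj Hb]] ->]]. rewrite aren_ain. apply voter_inputs.
  exists j. split; auto. apply (Hu j Hj), Hb.
Qed.

Lemma projection_is_run (u : nat -> proc M) (rho : run4 M) (i : nat) :
  decomposed_run u rho -> i < n ->
  cC (single_system i) (rc (proj_run n I i rho)) /\
  cE (single_system i) (re (proj_run n I i rho)) /\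
  cr (single_system i) (u i) (rc (proj_run n I i rho)) (re (proj_run n I i rho))
     (proj_run n I i rho).
Proof.
  intros [HC [HE [[Hproc Hfair] [Hvin Hparts]]]] Hi.
  destruct rho as [V C E pi]; simpl in *.
  assert (Hvout : forall j a x, j < n -> V a -> I j (ain a) -> aout a x -> O j x).
  { intros j a x Hj Ha Hc Hx. destruct (Hparts j Hj) as [[_ [Hu _]] [s [_ Hs]]].
    destruct (proj1 (Hs a) (conj Ha Hc)) as [b [Hb ->]].
    apply (proj2 (Hu b Hb)), (aren_aout _ s b x), Hx. }
  assert (Hcproc : is_proc (pin S Coercer) (pout S Coercer) C)
    by (apply (proj1 (proj2 S_protocol)); auto).
  destruct Hproc as [Hfin [_ Hdisj]].
  assert (Hsame : par (restr V (I i)) (par (par (restr V (others _ n I i)) C) E)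
                  = par V (par C E)).
  { apply proc_ext. intro a. unfold par, restr. split; [tauto|].
    intros [Ha|Ha]; [|tauto]. destruct (voter_input_split i (ain a) (Hvin a Ha)); tauto. }
  unfold single_system, induced, proj_run; simpl. split; [|split; [auto|]].
  - split; [|split].
    + apply finite_sub with (par V (par C E)); [exact Hfin|]. unfold par, restr. tauto.
    + intros a [[Ha [j [Hj [Hji Hc]]]]|Ha].
      * split; [right; exists j; auto|]. intros x Hx. right. exists j. eauto.
      * destruct (proj1 (proj2 Hcproc) a Ha). split; [left|intros; left]; auto.
    + intros a b Ha Hb Hne. apply Hdisj; auto; unfold par, restr in *; tauto.
  - split; [apply Hparts; auto|]. split; [apply renames_refl|].
    split; [apply renames_refl|]. unfold runs_of. simpl. rewrite Hsame.
    split; [split; [exact Hfin|split; auto]|exact Hfair].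
Qed.

Lemma others_inputs (i : nat) (W : proc M) (a : AP M) :
  restr W (others _ n I i) a -> pin S Voter (ain a).
Proof. intros [_ [j [Hj [_ Hc]]]]. apply voter_inputs. eauto. Qed.

(* On runs of [T], [rho |-> rho^(i)] is injective: the voter is recovered
   from voter [i] and the voters that joined the coercer. *)
Lemma projection_injective (i : nat) (rho rho0 : run4 M) :
  (forall a, rv rho a -> pin S Voter (ain a)) ->
  (forall a, rv rho0 a -> pin S Voter (ain a)) ->
  pP S Coercer (rc rho) -> pP S Coercer (rc rho0) ->
  proj_run n I i rho = proj_run n I i rho0 -> rho = rho0.
Proof.
  intros Hv Hv0 Hc Hc0 E. destruct rho as [V C Env pi], rho0 as [V0 C0 Env0 pi0].
  unfold proj_run in E. simpl in *. injection E as Ei Eo -> ->.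
  destruct (split_voter_coercer _ _ _ _ (others_inputs i V) (others_inputs i V0)
              (fun a => program_inputs Coercer C a Hc)
              (fun a => program_inputs Coercer C0 a Hc0) Eo) as [Eothers ->].
  assert (Hsub : forall W W' : proc M, (forall a, W a -> pin S Voter (ain a)) ->
            restr W (I i) = restr W' (I i) ->
            restr W (others _ n I i) = restr W' (others _ n I i) -> forall a, W a -> W' a).
  { intros W W' HW E1 E2 a Ha.
    destruct (voter_input_split i (ain a) (HW a Ha)) as [Hc'|Hc'].
    - assert (H : restr W (I i) a) by (split; auto). rewrite E1 in H. apply H.
    - assert (H : restr W (others _ n I i) a) by (split; auto). rewrite E2 in H. apply H. }
  f_equal. apply proc_ext. intro a. split; apply Hsub; auto.
Qed.

Lemma restr_other_voter (i j : nat) (V V' : proc M) :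
  j < n -> j <> i -> restr V (others _ n I i) = restr V' (others _ n I i) ->
  restr V (I j) = restr V' (I j).
Proof.
  intros Hj Hji E. apply proc_ext. intro a.
  assert (Hw : forall W, restr W (I j) a <-> restr W (others _ n I i) a /\ I j (ain a)).
  { intro W. unfold restr. split; [intros [Ha Hc]; split; [split; [auto|exists j; auto]|auto]|].
    intros [[Ha _] Hc]. auto. }
  rewrite !Hw, E. tauto.
Qed.

Lemma runs_in_gamma (gamma_i : run4 M -> Prop) (u : nat -> proc M) (i : nat)
    (c e : proc M) (rho : run4 M) :
  (forall rho, gamma_i rho -> cR (induced S) rho) ->
  (forall j, j < n -> is_proc (I j) (O j) (u j)) -> i < n ->
  (forall c e rho, cC (single_system i) c -> cE (single_system i) e ->
     cr (single_system i) (u i) c e rho -> proj_set n I i gamma_i rho) ->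
  cC (induced S) c -> cE (induced S) e -> cr (induced S) (bigpar n u) c e rho ->
  gamma_i rho.
Proof.
  intros Hgamma Hu Hi Hcounter Hc He Hr.
  pose proof (decomposed_of_run u c e rho Hu Hc He Hr) as Hdec.
  destruct (projection_is_run u rho i Hdec Hi) as [Hc' [He' Hr']].
  destruct (Hcounter _ _ _ Hc' He' Hr') as [rho0 [Hg0 E0]].
  destruct (Hgamma rho0 Hg0) as [HV0 [HC0 _]], Hdec as [HC [_ [_ [Hvin _]]]].
  rewrite (projection_injective i rho rho0 Hvin
             (fun a => program_inputs Voter _ a HV0) HC HC0 E0).
  exact Hg0.
Qed.

Section Hybrid.
Variable alpha : nat -> run4 M -> Prop.
Hypothesis alpha_runs : forall k rho, k <= n -> alpha k rho -> cR (induced S) rho.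

(* Conditions (i)/(ii) of coercion resistance of [T_i] for the step from
   program [a] to program [b] of voter [i]: each run of [a] in [alpha_k^(i)]
   is matched by an indistinguishable run of [b] in [alpha_(k-1)^(i)]. *)
Definition simulates (i : nat) (a b : proc M) : Prop :=
  forall k c e rho, 1 <= k <= n -> cC (single_system i) c -> cE (single_system i) e ->
    cr (single_system i) a c e rho -> proj_set n I i (alpha k) rho ->
    exists e' rho', cE (single_system i) e' /\ cr (single_system i) b c e' rho' /\
      proj_set n I i (alpha (k - 1)) rho' /\ csim (single_system i) rho rho'.

(* Runs only see programs up to renaming. *)
Lemma simulates_renames (i : nat) (a a' b b' : proc M) :
  renames a a' -> renames b b' -> simulates i a b -> simulates i a' b'.
Proof.
  intros Ha Hb Hsim k c e rho Hk Hc He [Hv Hr] Hal.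
  destruct (Hsim k c e rho Hk Hc He (conj (renames_trans _ _ _ Ha Hv) Hr) Hal)
    as [e' [rho' [He' [[Hv' Hr'] [Hal' Hind]]]]].
  exists e', rho'. split; [exact He'|split; [split; [|exact Hr']|split; auto]].
  exact (renames_trans _ _ _ (renames_sym _ _ Hb) Hv').
Qed.

Definition hybrid_run (u : nat -> proc M) (rho : run4 M) : Prop :=
  cR (induced S) rho /\ voter_parts u (rv rho).

Lemma hybrid_run_decomposed (u : nat -> proc M) (rho : run4 M) :
  hybrid_run u rho -> decomposed_run u rho.
Proof.
  intros [[HV [HC [HE Hrun]]] Hparts].
  split; [auto|split; [auto|split; [auto|split; [|auto]]]].
  intros a Ha. apply (program_inputs Voter (rv rho)); auto.
Qed.

Lemma hybrid_run_ext (u u' : nat -> proc M) (rho : run4 M) :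
  hybrid_run u rho -> (forall j, j < n -> u' j = u j) -> hybrid_run u' rho.
Proof. intros [HR Hparts] E. split; auto. intros j Hj. rewrite E; auto. Qed.

(* Replacing the program [u i] of voter [i] by [w]: apply [simulates] to
   [rho^(i)] and lift the resulting run of [T_i] back along [rho |-> rho^(i)]. *)
Lemma replace_one_voter (u : nat -> proc M) (rho : run4 M) (i k : nat) (w : proc M) :
  hybrid_run u rho -> alpha k rho -> 1 <= k <= n -> i < n -> is_proc (I i) (O i) w ->
  simulates i (u i) w ->
  exists rho', hybrid_run (fun j => if Nat.eq_dec j i then w else u j) rho' /\
    alpha (k - 1) rho' /\ rc rho' = rc rho /\
    steq M (chans (rc rho)) (nons (rc rho)) (rpi rho) (rpi rho').
Proof.
  intros Hhyb Hal Hk Hi Hw Hsim.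
  destruct (projection_is_run u rho i (hybrid_run_decomposed u rho Hhyb) Hi)
    as [Hc [He Hr]].
  destruct (Hsim k _ _ _ Hk Hc He Hr) as [e' [rho1 [_ [[Hw' _] [[rho' [Hal' ->]] [Hrc Hst]]]]]];
    [exists rho; auto|].
  assert (HR' : cR (induced S) rho') by (apply (alpha_runs (k - 1)); auto; lia).
  destruct Hhyb as [[_ [HC _]] Hparts]. pose proof (proj1 (proj2 HR')) as HC'.
  simpl in Hrc, Hst, Hw'.
  destruct (split_voter_coercer _ _ _ _ (others_inputs i _) (others_inputs i _)
              (fun a => program_inputs Coercer _ a HC)
              (fun a => program_inputs Coercer _ a HC') Hrc) as [Eothers Ec].
  exists rho'. split; [split; [exact HR'|]|split; [exact Hal'|split; [auto|]]].
  - intros j Hj. destruct (Nat.eq_dec j i) as [->|Hne]; [split; auto|].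
    rewrite <- (restr_other_voter i j (rv rho) (rv rho')); auto.
  - eapply steq_mono; [| |exact Hst]; intros x [a [Ha Hx]]; exists a; split; auto; right; auto.
Qed.

Lemma replace_voters (u0 u1 : nat -> proc M) (rho0 : run4 M) :
  hybrid_run u0 rho0 -> alpha n rho0 ->
  (forall i, i < n -> is_proc (I i) (O i) (u1 i)) ->
  (forall i, i < n -> simulates i (u0 i) (u1 i)) ->
  forall m, m <= n -> exists rho,
    hybrid_run (fun j => if lt_dec j m then u1 j else u0 j) rho /\ alpha (n - m) rho /\
    rc rho = rc rho0 /\ steq M (chans (rc rho0)) (nons (rc rho0)) (rpi rho0) (rpi rho).
Proof.
  intros Hhyb Hal Hu1 Hsim. induction m as [|m IH]; intro Hm.
  - exists rho0. split; [|split; [rewrite Nat.sub_0_r; auto|split; auto using steq_refl]].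
    eapply hybrid_run_ext; [exact Hhyb|]. intros j Hj. destruct lt_dec; [lia|auto].
  - destruct IH as [rho [Hhyb' [Hal' [Hrc Hst]]]]; [lia|].
    assert (Hstep : simulates m ((fun j => if lt_dec j m then u1 j else u0 j) m) (u1 m)).
    { destruct lt_dec; [lia|]. apply Hsim. lia. }
    destruct (replace_one_voter _ rho m (n - m) (u1 m) Hhyb' Hal' ltac:(lia) ltac:(lia)
                (Hu1 m ltac:(lia)) Hstep) as [rho' [Hhyb'' [Hal'' [Hrc' Hst']]]].
    exists rho'. split; [|split; [|split]].
    + eapply hybrid_run_ext; [exact Hhyb''|]. intros j Hj.
      repeat destruct lt_dec; destruct Nat.eq_dec; subst; try lia; reflexivity.
    + replace (n - Datatypes.S m) with (n - m - 1) by lia. exact Hal''.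
    + congruence.
    + rewrite Hrc in Hst'. eapply steq_trans; eauto.
Qed.

Lemma simulate_all_voters (u0 u1 : nat -> proc M) (c e : proc M) (rho : run4 M) :
  (forall j, j < n -> is_proc (I j) (O j) (u0 j)) ->
  (forall j, j < n -> is_proc (I j) (O j) (u1 j)) ->
  nonce_disjoint n u1 ->
  (forall j, j < n -> simulates j (u0 j) (u1 j)) ->
  cr (induced S) (bigpar n u0) c e rho -> alpha n rho ->
  exists e' rho', cE (induced S) e' /\ cr (induced S) (bigpar n u1) c e' rho' /\
    csim (induced S) rho rho'.
Proof.
  intros Hu0 Hu1 Hnd Hsim [Hv [Hc [He Hrun]]] Hal.
  assert (Hhyb : hybrid_run u0 rho).
  { split; [apply (alpha_runs n); auto|apply voter_parts_of_renaming; auto]. }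
  destruct (replace_voters u0 u1 rho Hhyb Hal Hu1 Hsim n (le_n n))
    as [rho' [Hhyb' [_ [Hrc Hst]]]].
  assert (Hfinal : hybrid_run u1 rho').
  { eapply hybrid_run_ext; [exact Hhyb'|]. intros j Hj. cbv beta. destruct lt_dec; [auto|lia]. }
  destruct Hfinal as [[HV' [HC' [HE' Hrun']]] Hparts'].
  exists (re rho'), rho'. split; [exact HE'|split; [|split; auto]].
  split; [apply voter_parts_glue; auto|].
  split; [rewrite Hrc; auto|split; [apply renames_refl|exact Hrun']].
Qed.

Definition counter_strategy (gamma_i : run4 M -> Prop) (i : nat) (v w : proc M) : Prop :=
  is_proc (I i) (O i) w /\ in_residue_class n i w /\
  simulates i v w /\ simulates i w v /\
  (forall c e rho, cC (single_system i) c -> cE (single_system i) e ->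
     cr (single_system i) w c e rho -> proj_set n I i gamma_i rho).

Lemma counter_strategies (gamma : nat -> run4 M -> Prop) :
  (forall i, i < n -> coercion_resistant (single_system i) n
     (fun k => proj_set n I i (alpha k)) (proj_set n I i (gamma i))) ->
  exists f : nat -> proc M -> proc M, forall i v, i < n -> is_proc (I i) (O i) v ->
    counter_strategy (gamma i) i v (f i v).
Proof.
  intros HCR.
  destruct (choice (fun (iv : nat * proc M) w =>
              fst iv < n -> is_proc (I (fst iv)) (O (fst iv)) (snd iv) ->
              counter_strategy (gamma (fst iv)) (fst iv) (snd iv) w)) as [g Hg].
  2:{ exists (fun i v => g (i, v)). intros i v. exact (Hg (i, v)). }
  intros [i v]. simpl.
  destruct (classic (i < n /\ is_proc (I i) (O i) v)) as [[Hi Hv]|Hnot];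
    [|exists v; tauto].
  destruct (HCR i Hi v Hv) as [v' [Hv' [Hsim [Hsim' Hgamma]]]].
  destruct (rename_into_residue_class n i v' Hi (proj1 Hv')) as [w [Hw Hclass]].
  exists w. intros _ _.
  split; [exact (renames_is_proc _ _ _ _ Hw Hv')|split; [exact Hclass|]].
  split; [exact (simulates_renames i v v v' w (renames_refl v) Hw Hsim)|].
  split; [exact (simulates_renames i v' w v v Hw (renames_refl v) Hsim')|].
  intros c e rho Hc He [Hwr Hr]. apply (Hgamma c e rho Hc He).
  split; [exact (renames_trans _ _ _ Hw Hwr)|exact Hr].
Qed.

End Hybrid.
End CoercedVoters.

Theorem theorem3 (M : Model) (S : protocol M) (n : nat) (I O : nat -> Ch M -> Prop)
  (alpha : nat -> run4 M -> Prop) (gamma : nat -> run4 M -> Prop) :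
  is_protocol S ->
  (* the voter's channels are split among the n coerced voters *)
  (forall x, pin S Voter x <-> exists i, i < n /\ I i x) ->
  (forall x, pout S Voter x <-> exists i, i < n /\ O i x) ->
  (forall i j x, i < n -> j < n -> i <> j -> I i x -> I j x -> False) ->
  (* every program of v is of the form p_1 || ... || p_n, p_i in Proc(I_i, O_i) *)
  (forall v, pP S Voter v ->
     exists ps : nat -> proc M,
       (forall i, i < n -> is_proc (I i) (O i) (ps i)) /\
       (forall a, v a <-> bigpar n ps a)) ->
  (* alpha_0..alpha_n and gamma_1..gamma_n are sets of runs of T *)
  (forall k rho, k <= n -> alpha k rho -> cR (induced S) rho) ->
  (forall i rho, i < n -> gamma i rho -> cR (induced S) rho) ->
  (* each T_i is coercion resistant for (alpha_0^(i),...,alpha_n^(i)) w.r.t. gamma_i^(i) *)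
  (forall i, i < n ->
     coercion_resistant (induced (single_voter S n I O i)) n
       (fun k => proj_set n I i (alpha k)) (proj_set n I i (gamma i))) ->
  mv_coercion_resistant (induced S) n I O (alpha n)
    (fun rho => forall i, i < n -> gamma i rho).
Proof.
  intros HS HI _ HD _ Halpha Hgamma HCR.
  destruct (counter_strategies S n I O alpha gamma HCR) as [f Hf].
  exists f. split; [intros i v Hi Hv; apply Hf; auto|].
  intros vs Hvs HV. cbv zeta.
  assert (Hcounter : forall i, i < n ->
            counter_strategy S n I O alpha (gamma i) i (vs i) (f i (vs i))) by auto.
  assert (Hvs_in : forall j a, j < n -> vs j a -> I j (ain a))
    by (intros j a Hj Ha; apply (Hvs j Hj), Ha).
  split; [|split].
  - (* (i): the counter-strategies use disjoint residue classes of nonces *)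
    intros c e rho _ _. apply (simulate_all_voters S n I O); auto.
    + intros j Hj. apply Hcounter; auto.
    + apply residue_classes_disjoint. intros j Hj. apply Hcounter; auto.
    + intros j Hj. apply Hcounter; auto.
  - (* (ii): the parts of a voter program of [S] use disjoint nonces *)
    intros c e rho _ _. apply (simulate_all_voters S n I O); auto.
    + intros j Hj. apply Hcounter; auto.
    + apply bigpar_nonce_disjoint with I (pin S Voter) (pout S Voter); auto.
      apply (proj1 (proj2 HS)); auto.
    + intros j Hj. apply Hcounter; auto.
  -
    intros c e rho Hc He Hr i Hi.
    apply (runs_in_gamma S n I O HS HI HD (gamma i) (fun j => f j (vs j)) i c e rho
             (fun rho0 => Hgamma i rho0 Hi)); auto.
    + intros j Hj. apply Hcounter; auto.
    + apply Hcounter; auto.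
Qed.
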